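(* Let $\beta_1,\beta_2>0$, $\tau\in(0,1)$, and suppose $(\bar x,\bar y)\in X\times\mathbb{R}^m$ satisfies the excessive gap condition $f(\bar x;\beta_2)\le d(\bar y;\beta_1)$. Set $\beta_1^+:=(1-\tau)\beta_1$, $\beta_2^+:=(1-\tau)\beta_2$ and define $$\hat x:=(1-\tau)\bar x+\tau x^*(\bar y;\beta_1),\qquad \bar y^+:=(1-\tau)\bar y+\tau y^*(\hat x;\beta_2^+),\qquad \bar x^+:=P(\hat x;\beta_2^+).$$ If $$\beta_1\beta_2\ge\frac{2\tau^2}{(1-\tau)^2}\max_{i=1,2}\frac{\|A_i\|^2}{\sigma_i},$$ then $(\bar x^+,\bar y^+)\in X\times\mathbb{R}^m$ and $f(\bar x^+;\beta_2^+)\le d(\bar y^+;\beta_1^+)$.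
   Context: All spaces carry the Euclidean inner product and norm $\|\cdot\|$; for a matrix, $\|\cdot\|$ is the induced operator norm. For $i=1,2$: $X_i\subset\mathbb{R}^{n_i}$ is nonempty, closed, convex and bounded; $\phi_i:\mathbb{R}^{n_i}\to\mathbb{R}$ is convex; $A_i\in\mathbb{R}^{m\times n_i}$; $b\in\mathbb{R}^m$. Write $x=(x_1,x_2)$, $X=X_1\times X_2$, $A=[A_1,A_2]$ (so $Ax=A_1x_1+A_2x_2$), $\phi(x)=\phi_1(x_1)+\phi_2(x_2)$. For $i=1,2$, $p_i$ is a prox-function of $X_i$: continuous and strongly convex on $X_i$ with convexity parameter $\sigma_i>0$, with prox-center $x_i^c=\arg\min_{x_i\in X_i}p_i(x_i)$ normalized so $p_i(x_i^c)=0$. For $\beta_1>0$, $d(y;\beta_1):=\min_{x\in X}\{\phi(x)+y^T(Ax-b)+\beta_1(p_1(x_1)+p_2(x_2))\}$, whose (unique) minimizer is denoted $x^*(y;\beta_1)=(x_1^*(y;\beta_1),x_2^*(y;\beta_1))$. For $\beta_2>0$, $y^*(x;\beta_2):=\frac{1}{\beta_2}(Ax-b)$ and $f(x;\beta_2):=\phi(x)+\frac{1}{2\beta_2}\|Ax-b\|^2$. With $L_i^\psi(\beta_2):=\frac{2\|A_i\|^2}{\beta_2}$, the proximal mapping is $P_i(\hat x;\beta_2):=\arg\min_{x_i\in X_i}\{\phi_i(x_i)+y^*(\hat x;\beta_2)^TA_i(x_i-\hat x_i)+\frac{L_i^\psi(\beta_2)}{2}\|x_i-\hat x_i\|^2\}$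 for $\hat x=(\hat x_1,\hat x_2)$, and $P(\hat x;\beta_2):=(P_1(\hat x;\beta_2),P_2(\hat x;\beta_2))$. *)

From mathcomp Require Import all_boot.
From Stdlib Require Import Reals.
Set Implicit Arguments. Unset Strict Implicit.
Local Open Scope R_scope.

Definition vec (n : nat) := 'I_n -> R.
Definition mat (m n : nat) := 'I_m -> 'I_n -> R.

Definition vadd n (u v : vec n) : vec n := fun i => u i + v i.
Definition vsub n (u v : vec n) : vec n := fun i => u i - v i.
Definition vscal n (a : R) (u : vec n) : vec n := fun i => a * u i.

Definition dot n (u v : vec n) : R := \big[Rplus/0]_(i < n) (u i * v i).
Definition nrm n (u : vec n) : R := sqrt (dot u u).

Definition mv m n (A : mat m n) (x : vec n) : vec m :=
  fun r => \big[Rplus/0]_(j < n) (A r j * x j).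

Definition is_opnorm m n (A : mat m n) (c : R) : Prop :=
  is_lub (fun r => exists x : vec n, nrm x <= 1 /\ r = nrm (mv A x)) c.

Definition enonempty_set n (S : vec n -> Prop) := exists x, S x.
Definition eclosed_set n (S : vec n -> Prop) :=
  forall x, (forall eps, 0 < eps -> exists y, S y /\ nrm (vsub y x) < eps) -> S x.
Definition econvex_set n (S : vec n -> Prop) :=
  forall x y t, S x -> S y -> 0 <= t <= 1 ->
    S (vadd (vscal t x) (vscal (1 - t) y)).
Definition ebounded_set n (S : vec n -> Prop) :=
  exists M, forall x, S x -> nrm x <= M.

Definition econvex_fun n (g : vec n -> R) :=
  forall x y t, 0 <= t <= 1 ->
    g (vadd (vscal t x) (vscal (1 - t) y)) <= t * g x + (1 - t) * g y.

Definition econtinuous_on n (S : vec n -> Prop) (g : vec n -> R) :=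
  forall x, S x -> forall eps, 0 < eps -> exists delta, 0 < delta /\
    forall y, S y -> nrm (vsub y x) < delta -> Rabs (g y - g x) < eps.

Definition estrongly_convex_on n (S : vec n -> Prop) (g : vec n -> R) (sigma : R) :=
  forall x y t, S x -> S y -> 0 <= t <= 1 ->
    g (vadd (vscal t x) (vscal (1 - t) y)) <=
      t * g x + (1 - t) * g y - sigma / 2 * t * (1 - t) * (nrm (vsub x y)) ^ 2.

Definition eprox_function n (S : vec n -> Prop) (p : vec n -> R) (sigma : R) :=
  econtinuous_on S p /\ 0 < sigma /\ estrongly_convex_on S p sigma /\
  exists xc, S xc /\ p xc = 0 /\ (forall x, S x -> p xc <= p x).

Definition eis_argmin n (S : vec n -> Prop) (g : vec n -> R) (x : vec n) :=
  S x /\ forall z, S z -> g x <= g z.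

Section Problem.
Variables (m n1 n2 : nat) (phi1 : vec n1 -> R) (phi2 : vec n2 -> R)
  (A1 : mat m n1) (A2 : mat m n2) (b : vec m)
  (p1 : vec n1 -> R) (p2 : vec n2 -> R).

Definition resid (x1 : vec n1) (x2 : vec n2) : vec m :=
  vsub (vadd (mv A1 x1) (mv A2 x2)) b.

(* objective defining d(y; beta1) *)
Definition dobj (y : vec m) (beta1 : R) (x1 : vec n1) (x2 : vec n2) : R :=
  phi1 x1 + phi2 x2 + dot y (resid x1 x2) + beta1 * (p1 x1 + p2 x2).

Definition is_xstar (X1 : vec n1 -> Prop) (X2 : vec n2 -> Prop)
  (y : vec m) (beta1 : R) (x1 : vec n1) (x2 : vec n2) : Prop :=
  X1 x1 /\ X2 x2 /\
  forall z1 z2, X1 z1 -> X2 z2 -> dobj y beta1 x1 x2 <= dobj y beta1 z1 z2.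

Definition ystar (x1 : vec n1) (x2 : vec n2) (beta2 : R) : vec m :=
  vscal (/ beta2) (resid x1 x2).

Definition fval (x1 : vec n1) (x2 : vec n2) (beta2 : R) : R :=
  phi1 x1 + phi2 x2 + / (2 * beta2) * (nrm (resid x1 x2)) ^ 2.

(* objectives of the proximal mappings P_1, P_2; nA1, nA2 are ||A1||, ||A2|| *)
Definition Pobj1 (nA1 : R) (xh1 : vec n1) (xh2 : vec n2) (beta2 : R)
  (z : vec n1) : R :=
  phi1 z + dot (ystar xh1 xh2 beta2) (mv A1 (vsub z xh1))
  + (2 * nA1 ^ 2 / beta2) / 2 * (nrm (vsub z xh1)) ^ 2.

Definition Pobj2 (nA2 : R) (xh1 : vec n1) (xh2 : vec n2) (beta2 : R)
  (z : vec n2) : R :=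
  phi2 z + dot (ystar xh1 xh2 beta2) (mv A2 (vsub z xh2))
  + (2 * nA2 ^ 2 / beta2) / 2 * (nrm (vsub z xh2)) ^ 2.

End Problem.

(* Write r(x) = A x - b, y_hat = y*(x_hat; beta2+), beta2+ = (1 - tau) beta2,
   and let (z1, z2) be the minimizer defining d(y+; beta1+).  The proof
   compares both sides of the claimed inequality through four estimates:
   - quadratic growth: strong convexity of p_i makes the objective of
     d(y_bar; beta1) grow quadratically (with modulus beta1 sigma_i) away
     from its minimizer x*(y_bar; beta1);
   - separable majorant: since ||A_i v|| <= ||A_i|| ||v||, the value
     f(x; beta2+) is bounded by ||r(x_hat)||^2 / (2 beta2+) plus the two
     proximal objectives P_1, P_2 evaluated at x_1, x_2;
   - comparison point: x+_i minimizes P_i, so P_i(x+_i) is at most its value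
     at tau z_i + (1 - tau) x_bar_i, which convexity of phi_i bounds;
   - interpolation gap: r(x_hat) = (1 - tau) r(x_bar) + tau r(x_star) gives the
     quadratic-term inequality, and the step-size condition on beta1 beta2
     absorbs the remaining ||A_i||^2 terms into the growth terms.
   Since d's objective is affine in (y, beta1), the theorem follows by adding
   these estimates to (1 - tau) times the assumed excessive gap. *)
From Pilot Require Import Defs.
From mathcomp Require Import all_boot.
From Stdlib Require Import Reals Lra FunctionalExtensionality.
From HB Require Import structures.
Set Implicit Arguments. Unset Strict Implicit.
Local Open Scope R_scope.

(* Real addition is a commutative monoid, so the bigop lemmas apply to sums. *)
HB.instance Definition _ :=
  Monoid.isComLaw.Build R 0 Rplus (fun a b c => esym (Rplus_assoc a b c))
    Rplus_comm Rplus_0_l.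

Lemma sum_add n (F G : 'I_n -> R) :
  \big[Rplus/0]_(i < n) (F i + G i)
  = \big[Rplus/0]_(i < n) F i + \big[Rplus/0]_(i < n) G i.
Proof. exact: big_split. Qed.

Lemma sum_scal n a (F : 'I_n -> R) :
  \big[Rplus/0]_(i < n) (a * F i) = a * \big[Rplus/0]_(i < n) F i.
Proof. by apply: (big_rec2 (fun x y => x = a * y)) => [|i x y _ ->]; ring. Qed.

Lemma sum_ge0 n (F : 'I_n -> R) :
  (forall i, 0 <= F i) -> 0 <= \big[Rplus/0]_(i < n) F i.
Proof.
move=> F_ge0; apply: (big_rec (fun x => 0 <= x)) => [|i x _ hx]; first lra.
by have := F_ge0 i; lra.
Qed.

Lemma dot_comm n (u w : vec n) : dot u w = dot w u.
Proof. by rewrite /dot; apply: eq_bigr => i _; ring. Qed.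

Lemma dot_addl n (u v w : vec n) : dot (vadd u v) w = dot u w + dot v w.
Proof. by rewrite /dot -sum_add; apply: eq_bigr => i _; rewrite /vadd; ring. Qed.

Lemma dot_scall n a (u w : vec n) : dot (vscal a u) w = a * dot u w.
Proof. by rewrite /dot -sum_scal; apply: eq_bigr => i _; rewrite /vscal; ring. Qed.

Lemma dot_subl n (u v w : vec n) : dot (vsub u v) w = dot u w - dot v w.
Proof.
have -> : vsub u v = vadd u (vscal (-1) v).
  by apply: functional_extensionality => i; rewrite /vsub /vadd /vscal; ring.
by rewrite dot_addl dot_scall; ring.
Qed.

Lemma dot_addr n (u v w : vec n) : dot w (vadd u v) = dot w u + dot w v.
Proof. by rewrite dot_comm dot_addl !(dot_comm w). Qed.

Lemma dot_subr n (u v w : vec n) : dot w (vsub u v) = dot w u - dot w v.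
Proof. by rewrite dot_comm dot_subl !(dot_comm w). Qed.

Lemma dot_scalr n a (u w : vec n) : dot w (vscal a u) = a * dot w u.
Proof. by rewrite dot_comm dot_scall (dot_comm w). Qed.

Lemma dot_ge0 n (u : vec n) : 0 <= dot u u.
Proof. by apply: sum_ge0 => i; nra. Qed.

Lemma nrm2 n (u : vec n) : nrm u ^ 2 = dot u u.
Proof. by rewrite /nrm pow2_sqrt //; apply: dot_ge0. Qed.

Lemma nrm_scal n a (u : vec n) : nrm (vscal a u) = Rabs a * nrm u.
Proof.
rewrite /nrm dot_scall dot_scalr -Rmult_assoc sqrt_mult_alt; last by nra.
by rewrite -sqrt_Rsqr_abs /Rsqr.
Qed.

Lemma nrm2_scal n a (u : vec n) : nrm (vscal a u) ^ 2 = a ^ 2 * nrm u ^ 2.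
Proof. by rewrite !nrm2 dot_scall dot_scalr; ring. Qed.

Lemma nrm2_add n (u v : vec n) :
  nrm (vadd u v) ^ 2 = nrm u ^ 2 + 2 * dot u v + nrm v ^ 2.
Proof. by rewrite !nrm2 dot_addl !dot_addr (dot_comm v u); ring. Qed.

(* ||u + v||^2 <= 2 ||u||^2 + 2 ||v||^2, used to decouple the two blocks. *)
Lemma nrm2_add_le n (u v : vec n) :
  nrm (vadd u v) ^ 2 <= 2 * nrm u ^ 2 + 2 * nrm v ^ 2.
Proof.
have := dot_ge0 (vsub u v).
rewrite dot_subl !dot_subr !nrm2 dot_addl !dot_addr (dot_comm v u); lra.
Qed.

Lemma mv_add m n (A : mat m n) u v : mv A (vadd u v) = vadd (mv A u) (mv A v).
Proof.
apply: functional_extensionality => r.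
by rewrite /mv /vadd -sum_add; apply: eq_bigr => i _; ring.
Qed.

Lemma mv_scal m n (A : mat m n) a u : mv A (vscal a u) = vscal a (mv A u).
Proof.
apply: functional_extensionality => r.
by rewrite /mv /vscal -sum_scal; apply: eq_bigr => i _; ring.
Qed.

Lemma mv_sub m n (A : mat m n) u v : mv A (vsub u v) = vsub (mv A u) (mv A v).
Proof.
have -> : vsub u v = vadd u (vscal (-1) v).
  by apply: functional_extensionality => i; rewrite /vsub /vadd /vscal; ring.
rewrite mv_add mv_scal.
by apply: functional_extensionality => i; rewrite /vsub /vadd /vscal; ring.
Qed.

(* The operator norm is nonnegative: the zero vector lies in the unit ball. *)
Lemma opnorm_ge0 m n (A : mat m n) c : is_opnorm A c -> 0 <= c.
Proof.
move=> [ub _]; set z : vec n := vscal 0 (fun _ => 0).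
have nz : nrm z = 0 by rewrite nrm_scal Rabs_R0; ring.
apply: ub; exists z; split; first lra.
by rewrite /z mv_scal nrm_scal Rabs_R0; ring.
Qed.

(* ||A x|| <= c ||x||: apply the defining bound to x / (||x|| + eps). *)
Lemma opnorm_le m n (A : mat m n) c x : is_opnorm A c ->
  nrm (mv A x) <= c * nrm x.
Proof.
move=> hA; have c_ge0 := opnorm_ge0 hA; case: hA => ub _.
have x_ge0 : 0 <= nrm x by apply: sqrt_pos.
apply: Rle_plus_epsilon => eps heps.
set k := nrm x + eps / (c + 1).
have k_gt0 : 0 < k by rewrite /k; have := Rdiv_lt_0_compat eps (c + 1); lra.
have kinv_gt0 := Rinv_0_lt_compat _ k_gt0.
have hunit : / k * nrm (mv A x) <= c.
  apply: ub; exists (vscal (/ k) x).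
  rewrite mv_scal !nrm_scal Rabs_right; last lra.
  split=> //; apply: (Rmult_le_reg_l k) => //.
  rewrite -Rmult_assoc Rinv_r; last lra.
  by have := Rdiv_lt_0_compat eps (c + 1); rewrite /k; lra.
have hAx : nrm (mv A x) <= c * k.
  have -> : nrm (mv A x) = k * (/ k * nrm (mv A x)) by field; lra.
  by rewrite (Rmult_comm c); apply: Rmult_le_compat_l; lra.
have : c * (eps / (c + 1)) <= eps.
  have -> : c * (eps / (c + 1)) = eps * (c / (c + 1)) by field; lra.
  have : c / (c + 1) <= 1.
    by apply: (Rmult_le_reg_l (c + 1)); [lra | field_simplify; lra].
  nra.
by rewrite /k in hAx; lra.
Qed.

Lemma opnorm_sq m n (A : mat m n) c x : is_opnorm A c ->
  nrm (mv A x) ^ 2 <= c ^ 2 * nrm x ^ 2.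
Proof.
move=> hA; have := opnorm_le x hA.
have := sqrt_pos (dot (mv A x) (mv A x)); rewrite /nrm; nra.
Qed.

(* A convex-combination inequality with curvature term t (1 - t) S, valid for
   all t in (0, 1], forces growth by S: let t tend to 0. *)
Lemma growth_of_segment_bound (G0 Gz S : R) : 0 <= S ->
  (forall t, 0 < t <= 1 -> G0 <= t * Gz + (1 - t) * G0 - t * (1 - t) * S) ->
  G0 + S <= Gz.
Proof.
move=> S_ge0 seg; apply: Rle_plus_epsilon => eps heps.
set t := eps / (eps + S + 1).
have ht : 0 < t < 1.
  split; first by apply: Rdiv_lt_0_compat; lra.
  by apply: (Rmult_lt_reg_l (eps + S + 1)); [lra | rewrite /t; field_simplify; lra].
have tS_le : t * S <= eps.
  rewrite /t; apply: (Rmult_le_reg_l (eps + S + 1)); first lra.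
  by field_simplify; [nra | lra].
have hseg := seg t ltac:(lra).
have : G0 + (1 - t) * S - Gz <= 0 by apply: (Rmult_le_reg_l t); lra.
lra.
Qed.

Definition prox_obj m n (phi : vec n -> R) (A : mat m n) (y : vec m) (L : R)
  (xh z : vec n) : R :=
  phi z + dot y (mv A (vsub z xh)) + L / 2 * nrm (vsub z xh) ^ 2.

(* Evaluating a proximal objective centred at xh = (1 - tau) xb + tau xs at
   the point tau z + (1 - tau) xb, whose displacement from xh is
   tau (z - xs), and bounding phi there by convexity. *)
Lemma prox_obj_at_interpolant m n (phi : vec n -> R) (A : mat m n) y L
  (tau : R) (xb xs z xh : vec n) :
  econvex_fun phi -> 0 <= tau <= 1 ->
  xh = vadd (vscal (1 - tau) xb) (vscal tau xs) ->
  prox_obj phi A y L xh (vadd (vscal tau z) (vscal (1 - tau) xb))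
  <= tau * phi z + (1 - tau) * phi xb + tau * dot y (mv A (vsub z xs))
     + L / 2 * tau ^ 2 * nrm (vsub z xs) ^ 2.
Proof.
move=> cvx htau ->; rewrite /prox_obj.
have -> : vsub (vadd (vscal tau z) (vscal (1 - tau) xb))
            (vadd (vscal (1 - tau) xb) (vscal tau xs)) = vscal tau (vsub z xs).
  by apply: functional_extensionality => i; rewrite /vsub /vadd /vscal; ring.
rewrite mv_scal dot_scalr nrm2_scal.
have := cvx z xb tau htau; lra.
Qed.

(* Quadratic-term inequality behind the choice y+ = (1 - tau) y + tau y_hat:
   with h = (1 - tau) a + tau c, ||h||^2 - 2 tau <h, c> = ||h - tau c||^2
   - tau^2 ||c||^2 <= (1 - tau)^2 ||a||^2. *)
Lemma interpolation_gap n (a c h : vec n) (tau beta : R) :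
  0 < tau < 1 -> 0 < beta -> h = vadd (vscal (1 - tau) a) (vscal tau c) ->
  / (2 * ((1 - tau) * beta)) * nrm h ^ 2
  <= (1 - tau) * (/ (2 * beta) * nrm a ^ 2)
     + tau * dot (vscal (/ ((1 - tau) * beta)) h) c.
Proof.
move=> htau hbeta ->.
rewrite dot_scall !nrm2 !dot_addl !dot_addr !dot_scall !dot_scalr (dot_comm c a).
have cc := dot_ge0 c.
have -> : / (2 * beta) = (1 - tau) * / (2 * ((1 - tau) * beta)) by field; lra.
have -> : / ((1 - tau) * beta) = 2 * / (2 * ((1 - tau) * beta)) by field; lra.
have : 0 < / (2 * ((1 - tau) * beta)) by apply: Rinv_0_lt_compat; nra.
set k := / (2 * _) => k_gt0.
have : 0 <= k * (tau ^ 2 * dot c c) by apply: Rmult_le_pos; nra.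
lra.
Qed.

(* The step-size condition beta1 beta2 >= 2 tau^2/(1-tau)^2 ||A_i||^2/sigma_i
   lets the growth modulus (1-tau) beta1 sigma_i / 2 dominate the proximal
   curvature ||A_i||^2 / beta2+ scaled by tau^2. *)
Lemma step_size_condition (nA sigma M beta1 beta2 tau : R) :
  0 < sigma -> 0 < beta2 -> 0 < tau < 1 -> nA ^ 2 / sigma <= M ->
  beta1 * beta2 >= 2 * tau ^ 2 / (1 - tau) ^ 2 * M ->
  2 * nA ^ 2 / ((1 - tau) * beta2) / 2 * tau ^ 2 <= (1 - tau) * (beta1 / 2 * sigma).
Proof.
move=> hs hb htau hM hbeta.
have w_ge0 : 0 <= 2 * tau ^ 2 / (1 - tau) ^ 2.
  by apply: Rmult_le_pos; [nra | apply: Rlt_le; apply: Rinv_0_lt_compat; nra].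
have hcond : 2 * tau ^ 2 * nA ^ 2 <= beta1 * beta2 * ((1 - tau) ^ 2 * sigma).
  have -> : 2 * tau ^ 2 * nA ^ 2
          = 2 * tau ^ 2 / (1 - tau) ^ 2 * (nA ^ 2 / sigma) * ((1 - tau) ^ 2 * sigma).
    by field; split; lra.
  apply: Rmult_le_compat_r; first by apply: Rmult_le_pos; [apply: pow2_ge_0 | lra].
  by have := Rmult_le_compat_l _ _ _ w_ge0 hM; lra.
apply: (Rmult_le_reg_r (2 * ((1 - tau) * beta2))); first nra.
have -> : 2 * nA ^ 2 / ((1 - tau) * beta2) / 2 * tau ^ 2 * (2 * ((1 - tau) * beta2))
        = 2 * tau ^ 2 * nA ^ 2 by field; lra.
nra.
Qed.

Section Model.
Variables (m n1 n2 : nat) (phi1 : vec n1 -> R) (phi2 : vec n2 -> R)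
  (A1 : mat m n1) (A2 : mat m n2) (b : vec m)
  (p1 : vec n1 -> R) (p2 : vec n2 -> R).

Local Notation r := (resid A1 A2 b).
Local Notation dobj := (dobj phi1 phi2 A1 A2 b p1 p2).
Local Notation fval := (fval phi1 phi2 A1 A2 b).

Lemma resid_affine (s t : R) z1 z2 x1 x2 : s + t = 1 ->
  r (vadd (vscal s z1) (vscal t x1)) (vadd (vscal s z2) (vscal t x2))
  = vadd (vscal s (r z1 z2)) (vscal t (r x1 x2)).
Proof.
move=> hst; have -> : t = 1 - s by lra.
rewrite /resid !mv_add !mv_scal.
by apply: functional_extensionality => i; rewrite /vadd /vsub /vscal; ring.
Qed.

Lemma resid_shift z1 z2 x1 x2 :
  r z1 z2 = vadd (r x1 x2) (vadd (mv A1 (vsub z1 x1)) (mv A2 (vsub z2 x2))).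
Proof.
rewrite /resid !mv_sub.
by apply: functional_extensionality => i; rewrite /vsub /vadd; ring.
Qed.

Lemma dobj_affine (tau beta : R) y y' z1 z2 :
  dobj (vadd (vscal (1 - tau) y) (vscal tau y')) ((1 - tau) * beta) z1 z2
  = (1 - tau) * dobj y beta z1 z2 + tau * (phi1 z1 + phi2 z2 + dot y' (r z1 z2)).
Proof. by rewrite /Defs.dobj dot_addl !dot_scall; ring. Qed.

(* Quadratic growth of the smoothed dual objective around its minimizer:
   strong convexity of p1, p2 is inherited with modulus beta sigma_i. *)
Lemma dobj_growth (X1 : vec n1 -> Prop) (X2 : vec n2 -> Prop) s1 s2 y beta
  x1 x2 z1 z2 :
  econvex_set X1 -> econvex_set X2 -> econvex_fun phi1 -> econvex_fun phi2 ->
  estrongly_convex_on X1 p1 s1 -> estrongly_convex_on X2 p2 s2 ->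
  0 <= beta -> 0 <= s1 -> 0 <= s2 ->
  is_xstar phi1 phi2 A1 A2 b p1 p2 X1 X2 y beta x1 x2 -> X1 z1 -> X2 z2 ->
  dobj y beta x1 x2 + beta / 2 * (s1 * nrm (vsub z1 x1) ^ 2 + s2 * nrm (vsub z2 x2) ^ 2)
  <= dobj y beta z1 z2.
Proof.
move=> cX1 cX2 cf1 cf2 sc1 sc2 hb hs1 hs2 [hx1 [hx2 xmin]] hz1 hz2.
apply: growth_of_segment_bound.
  have := pow2_ge_0 (nrm (vsub z1 x1)); have := pow2_ge_0 (nrm (vsub z2 x2)).
  by move=> h1 h2; apply: Rmult_le_pos; [lra | nra].
move=> t ht; have ht' : 0 <= t <= 1 by lra.
have hmin := xmin _ _ (cX1 _ _ _ hz1 hx1 ht') (cX2 _ _ _ hz2 hx2 ht').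
rewrite /Defs.dobj resid_affine in hmin *; last ring.
rewrite (dot_addr (vscal t _)) !dot_scalr in hmin.
have cvx1 := cf1 z1 x1 t ht'; have cvx2 := cf2 z2 x2 t ht'.
have := Rmult_le_compat_l _ _ _ hb
  (Rplus_le_compat _ _ _ _ (sc1 _ _ _ hz1 hx1 ht') (sc2 _ _ _ hz2 hx2 ht')).
lra.
Qed.

(* Separable quadratic majorant of f(.; beta) around xh: the coupling term
   splits into the two block proximal objectives. *)
Lemma fval_majorant nA1 nA2 (beta : R) xh1 xh2 x1 x2 :
  is_opnorm A1 nA1 -> is_opnorm A2 nA2 -> 0 < beta ->
  fval x1 x2 beta
  <= / (2 * beta) * nrm (r xh1 xh2) ^ 2
     + Pobj1 phi1 A1 A2 b nA1 xh1 xh2 beta x1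
     + Pobj2 phi2 A1 A2 b nA2 xh1 xh2 beta x2.
Proof.
move=> hA1 hA2 hbeta.
rewrite /Defs.fval /Pobj1 /Pobj2 /ystar (resid_shift x1 x2 xh1 xh2).
set h := r xh1 xh2; set v1 := mv A1 _; set v2 := mv A2 _.
have hv := nrm2_add_le v1 v2.
have hv1 := opnorm_sq (vsub x1 xh1) hA1; have hv2 := opnorm_sq (vsub x2 xh2) hA2.
rewrite -/v1 -/v2 in hv1 hv2.
clearbody h v1 v2.
rewrite nrm2_add dot_addr !dot_scall.
have -> : / (2 * beta) = / beta / 2 by field; lra.
have ib_gt0 : 0 < / beta by apply: Rinv_0_lt_compat.
have : / beta / 2 * nrm (vadd v1 v2) ^ 2
       <= / beta / 2 * (2 * (nA1 ^ 2 * nrm (vsub x1 xh1) ^ 2)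
                        + 2 * (nA2 ^ 2 * nrm (vsub x2 xh2) ^ 2)).
  by apply: Rmult_le_compat_l; lra.
have -> : forall nA, 2 * nA ^ 2 / beta / 2 = nA ^ 2 * / beta by move=> nA; field; lra.
lra.
Qed.

End Model.

Theorem theorem1
  (m n1 n2 : nat)
  (X1 : vec n1 -> Prop) (X2 : vec n2 -> Prop)
  (phi1 : vec n1 -> R) (phi2 : vec n2 -> R)
  (A1 : mat m n1) (A2 : mat m n2) (b : vec m)
  (p1 : vec n1 -> R) (p2 : vec n2 -> R) (sigma1 sigma2 : R)
  (nA1 nA2 : R)
  (hX1 : enonempty_set X1 /\ eclosed_set X1 /\ econvex_set X1 /\ ebounded_set X1)
  (hX2 : enonempty_set X2 /\ eclosed_set X2 /\ econvex_set X2 /\ ebounded_set X2)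
  (hphi1 : econvex_fun phi1) (hphi2 : econvex_fun phi2)
  (hp1 : eprox_function X1 p1 sigma1) (hp2 : eprox_function X2 p2 sigma2)
  (hnA1 : is_opnorm A1 nA1) (hnA2 : is_opnorm A2 nA2)
  (beta1 beta2 tau : R)
  (hbeta1 : 0 < beta1) (hbeta2 : 0 < beta2) (htau : 0 < tau < 1)
  (xb1 : vec n1) (xb2 : vec n2) (yb : vec m)
  (hxb1 : X1 xb1) (hxb2 : X2 xb2)
  (xs1 : vec n1) (xs2 : vec n2)
  (hxs : is_xstar phi1 phi2 A1 A2 b p1 p2 X1 X2 yb beta1 xs1 xs2)
  (hgap : fval phi1 phi2 A1 A2 b xb1 xb2 beta2
          <= dobj phi1 phi2 A1 A2 b p1 p2 yb beta1 xs1 xs2)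
  (hbeta : beta1 * beta2 >=
           2 * tau ^ 2 / (1 - tau) ^ 2 * Rmax (nA1 ^ 2 / sigma1) (nA2 ^ 2 / sigma2))
  (xh1 : vec n1) (xh2 : vec n2)
  (hxh1 : xh1 = vadd (vscal (1 - tau) xb1) (vscal tau xs1))
  (hxh2 : xh2 = vadd (vscal (1 - tau) xb2) (vscal tau xs2))
  (yp : vec m)
  (hyp : yp = vadd (vscal (1 - tau) yb)
                   (vscal tau (ystar A1 A2 b xh1 xh2 ((1 - tau) * beta2))))
  (xp1 : vec n1) (xp2 : vec n2)
  (hxp1 : eis_argmin X1 (Pobj1 phi1 A1 A2 b nA1 xh1 xh2 ((1 - tau) * beta2)) xp1)
  (hxp2 : eis_argmin X2 (Pobj2 phi2 A1 A2 b nA2 xh1 xh2 ((1 - tau) * beta2)) xp2) :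
  X1 xp1 /\ X2 xp2 /\
  forall zs1 zs2,
    is_xstar phi1 phi2 A1 A2 b p1 p2 X1 X2 yp ((1 - tau) * beta1) zs1 zs2 ->
    fval phi1 phi2 A1 A2 b xp1 xp2 ((1 - tau) * beta2)
      <= dobj phi1 phi2 A1 A2 b p1 p2 yp ((1 - tau) * beta1) zs1 zs2.
Proof.
case: hX1 => _ [_ [cX1 _]]; case: hX2 => _ [_ [cX2 _]].
case: hp1 => _ [hs1 [sc1 _]]; case: hp2 => _ [hs2 [sc2 _]].
case: hxp1 => xp1_in xp1_min; case: hxp2 => xp2_in xp2_min.
split=> //; split=> // zs1 zs2 [zs1_in [zs2_in _]].
have htau' : 0 <= tau <= 1 by lra.
have beta2p_gt0 : 0 < (1 - tau) * beta2 by nra.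
(* Dual side: growth of d's objective, combined with the excessive gap. *)
have growth := dobj_growth cX1 cX2 hphi1 hphi2 sc1 sc2 (Rlt_le _ _ hbeta1)
  (Rlt_le _ _ hs1) (Rlt_le _ _ hs2) hxs zs1_in zs2_in.
have scaled_gap := Rmult_le_compat_l (1 - tau) _ _ ltac:(lra)
  (Rle_trans _ _ _ (Rplus_le_compat_r _ _ _ hgap) growth).
(* Primal side: majorant, then compare x+ with tau zs + (1 - tau) xb. *)
have majorant := fval_majorant phi1 phi2 b xh1 xh2 xp1 xp2 hnA1 hnA2 beta2p_gt0.
have prox1 := Rle_trans _ _ _ (xp1_min _ (cX1 _ _ _ zs1_in hxb1 htau'))
  (prox_obj_at_interpolant A1 (ystar A1 A2 b xh1 xh2 ((1 - tau) * beta2))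
     (2 * nA1 ^ 2 / ((1 - tau) * beta2)) zs1 hphi1 htau' hxh1).
have prox2 := Rle_trans _ _ _ (xp2_min _ (cX2 _ _ _ zs2_in hxb2 htau'))
  (prox_obj_at_interpolant A2 (ystar A1 A2 b xh1 xh2 ((1 - tau) * beta2))
     (2 * nA2 ^ 2 / ((1 - tau) * beta2)) zs2 hphi2 htau' hxh2).
have resid_xh : resid A1 A2 b xh1 xh2 = vadd (vscal (1 - tau) (resid A1 A2 b xb1 xb2))
                                          (vscal tau (resid A1 A2 b xs1 xs2)).
  by rewrite hxh1 hxh2 resid_affine //; ring.
have gap := interpolation_gap htau hbeta2 resid_xh.
have step1 := Rmult_le_compat_r _ _ _ (pow2_ge_0 (nrm (vsub zs1 xs1)))
  (step_size_condition hs1 hbeta2 htau (Rmax_l _ _) hbeta).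
have step2 := Rmult_le_compat_r _ _ _ (pow2_ge_0 (nrm (vsub zs2 xs2)))
  (step_size_condition hs2 hbeta2 htau (Rmax_r _ _) hbeta).
rewrite hyp dobj_affine (resid_shift A1 A2 b zs1 zs2 xs1 xs2).
rewrite (dot_addr (resid A1 A2 b xs1 xs2)) (dot_addr (mv A1 (vsub zs1 xs1))).
rewrite /ystar in prox1 prox2 *; rewrite /fval in scaled_gap.
lra.
Qed.
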